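(* Let $q$ be a prime power, $r\ge 1$ an integer, and $\mathcal{S}$ a $q^r$-divisible spanning set of $q^{r+1}$ points in $\mathrm{PG}(v-1,q)$. Then the number of hyperplanes $H$ with $\mathcal{S}\cap H=\emptyset$ is at most $\left(q^{v-r-1}-q+2\right)/2$.
   Context: $\mathrm{PG}(v-1,q)$ is the projective space of $\mathbb{F}_q^v$; points are $1$-dimensional and hyperplanes $(v-1)$-dimensional subspaces of $\mathbb{F}_q^v$. A set $\mathcal{S}$ of points is spanning if its points span $\mathbb{F}_q^v$, and it is $q^r$-divisible if $|\mathcal{S}\cap H|\equiv|\mathcal{S}|\pmod{q^r}$ for every hyperplane $H$. *)

From HB Require Import structures.
From mathcomp Require Import all_boot all_order all_algebra all_field.
Set Implicit Arguments. Unset Strict Implicit. Unset Printing Implicit Defensive.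
Import Order.TTheory GRing.Theory Num.Theory.

(* A subspace of F^v is represented
   by its set of vectors: X is (the vector set of) a k-dimensional subspace iff
   X equals the set of vectors of its own span and that span has dimension k. *)
Definition is_subspace_dim (F : finFieldType) (v k : nat)
    (X : {set 'rV[F]_v}) : bool :=
  (X == [set x | x \in << enum X >>%VS]) && (\dim << enum X >>%VS == k).

Definition is_point (F : finFieldType) (v : nat) (P : {set 'rV[F]_v}) : bool :=
  is_subspace_dim 1 P.

Definition is_hyperplane (F : finFieldType) (v : nat) (H : {set 'rV[F]_v}) : bool :=
  is_subspace_dim v.-1 H.

Definition points_in (F : finFieldType) (v : nat)
    (S : {set {set 'rV[F]_v}}) (H : {set 'rV[F]_v}) : {set {set 'rV[F]_v}} :=
  [set P in S | P \subset H].

Definition spanning (F : finFieldType) (v : nat) (S : {set {set 'rV[F]_v}}) : Prop :=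
  (<< enum (\bigcup_(P in S) P) >>%VS = fullv).

Definition divisible (F : finFieldType) (v : nat) (S : {set {set 'rV[F]_v}})
    (r : nat) : Prop :=
  forall H : {set 'rV[F]_v}, is_hyperplane H ->
    #|points_in S H| = #|S| %[mod #|F| ^ r].

Definition n_disjoint_hyperplanes (F : finFieldType) (v : nat)
    (S : {set {set 'rV[F]_v}}) : nat :=
  #|[set H : {set 'rV[F]_v} | is_hyperplane H && (points_in S H == set0)]|.

From mathcomp Require Import all_boot all_order all_algebra all_field.
From mathcomp Require Import ring zify.
Set Implicit Arguments. Unset Strict Implicit. Unset Printing Implicit Defensive.
Import Order.TTheory GRing.Theory Num.Theory.
Local Open Scope ring_scope.

(* A vector u != 0 is the normal of the hyperplane ann u = {x | x u^T = 0}; let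
   hits u be the number of points of S in ann u (so hits 0 = |S|).  Double
   counting over all u in F^v, using that a nonzero vector (resp. two
   independent vectors) is orthogonal to q^(v-1) (resp. q^(v-2)) vectors, gives
     sum_u hits u = |S| q^(v-1),  sum_u (hits u)^2 = |S| (q^(v-1) + (|S|-1) q^(v-2)).
   By divisibility, hits u is a multiple of R = q^r for u != 0; the quadratic
   (x - R)(x - 2R) is nonnegative on such multiples and equals 2R^2 at x = 0.
   Summing it over u != 0 with the two moments bounds the number of normals of
   hyperplanes missing S; each such hyperplane has q - 1 normals, and the
   theorem follows. *)

Lemma sum_indicator (T : finType) (A b : pred T) :
  (\sum_(t | A t) b t = #|[set t | A t && b t]|)%N.
Proof.
rewrite -sum1_card big_mkcond [RHS]big_mkcond; apply: eq_bigr => t _.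
by rewrite inE; case: (A t); case: (b t).
Qed.

Lemma nat_quadratic_ge (K : realDomainType) (i : nat) :
  2 * (i == 0)%:R <= (i%:R - 1) * (i%:R - 2) :> K.
Proof.
case: i => [|[|i]]; first by rewrite mulr1 !sub0r mulrNN mul1r.
  by rewrite subrr mul0r mulr0.
have i2 : 2 <= i.+2%:R :> K by rewrite ler_nat.
by rewrite mulr0 mulr_ge0 // subr_ge0 // (le_trans _ i2) // ler1n.
Qed.

(* The test quadratic of the second-moment argument. *)
Definition excess (K : nzRingType) (R x : K) : K := (x - R) * (x - 2 * R).

Lemma excess_multiple_ge (K : realDomainType) (R : K) (i : nat) :
  2 * R ^+ 2 * (i == 0)%:R <= excess R (i%:R * R).
Proof.
have -> : excess R (i%:R * R) = R ^+ 2 * ((i%:R - 1) * (i%:R - 2)).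
  by rewrite /excess; ring.
by rewrite [2 * _]mulrC -mulrA ler_wpM2l ?sqr_ge0 // nat_quadratic_ge.
Qed.

Section RowSpaces.
Variable F : finFieldType.
Local Notation q := #|F|.

(* The row space of A has q^(rank A) vectors: it is parametrised injectively
   by the coordinates in a row basis of A. *)
Lemma card_rowspace m n (A : 'M[F]_(m, n)) :
  #|[set u : 'rV[F]_n | (u <= A)%MS]| = (q ^ \rank A)%N.
Proof.
rewrite -[\rank A]mul1n -card_mx -(card_imset _ (row_free_inj (row_base_free A))).
apply: eq_card => u; rewrite inE -(eq_row_base A).
apply/submxP/imsetP => [[c ->] | [c _ ->]]; [by exists c | by exists c].
Qed.

Lemma rank_two_rows n (p p' : 'rV[F]_n) :
  p != 0 -> p' \notin <[p]>%VS -> \rank (col_mx p p') = 2%N.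
Proof.
move=> pn0 p'np; apply/eqP; rewrite eqn_leq rank_leq_row /=.
have p'p : ~~ (p' <= p)%MS.
  apply: contra p'np => /submxP [d ->]; apply/vlineP; exists (d 0 0).
  by rewrite {1}(mx11_scalar d) mul_scalar_mx.
rewrite -(addsmxE p p').1.
have := ltn_leqif (mxrank_leqif_sup (addsmxSl p p')); rewrite rank_rV pn0 => ->.
by apply: contra p'p => /(submx_trans (addsmxSr p p')).
Qed.

End RowSpaces.

Section Geometry.
Variables (F : finFieldType) (v : nat).
Local Notation q := #|F|.
Implicit Types (x u p : 'rV[F]_v) (W : {vspace 'rV[F]_v}) (X : {set 'rV[F]_v}).

Definition ann m (A : 'M[F]_(m, v)) : {set 'rV[F]_v} := [set x | x *m A^T == 0].

Definition annv m (A : 'M[F]_(m, v)) : {vspace 'rV[F]_v} := lker (linfun (mulmxr A^T)).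

Lemma mem_ann m (A : 'M[F]_(m, v)) x : (x \in ann A) = (A *m x^T == 0).
Proof. by rewrite inE -(inj_eq (@trmx_inj _ _ _)) trmx_mul trmxK trmx0. Qed.

Lemma ann_sym x y : (x \in ann y) = (y \in ann x).
Proof. by rewrite mem_ann inE. Qed.

Lemma ann_row m (A : 'M[F]_(m, v)) i x : x \in ann A -> x \in ann (row i A).
Proof. by rewrite !mem_ann -row_mul => /eqP ->; rewrite row0. Qed.

Lemma ann_col_mx m1 m2 (A : 'M[F]_(m1, v)) (B : 'M[F]_(m2, v)) x :
  (x \in ann (col_mx A B)) = (x \in ann A) && (x \in ann B).
Proof. by rewrite !inE tr_col_mx mul_mx_row row_mx_eq0. Qed.

Lemma annvE m (A : 'M[F]_(m, v)) : ann A = [set x | x \in annv A].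
Proof. by apply/setP => x; rewrite !inE memv_ker lfunE. Qed.

(* ann A is the row space of the kernel of A^T, whose rank is v - rank A. *)
Lemma card_ann m (A : 'M[F]_(m, v)) : #|ann A| = (q ^ (v - \rank A))%N.
Proof.
rewrite -mxrank_tr -mxrank_ker -card_rowspace.
by apply: eq_card => x; rewrite !inE sub_kermx.
Qed.

Lemma dimv_card W k : #|W| = (q ^ k)%N -> \dim W = k.
Proof. by rewrite card_vspace => /eqP; rewrite eqn_exp2l ?finNzRing_gt1 // => /eqP. Qed.

Lemma dim_annv m (A : 'M[F]_(m, v)) : \dim (annv A) = (v - \rank A)%N.
Proof. by apply: dimv_card; rewrite -card_ann annvE cardsE. Qed.

Lemma span_set W : <<enum [set x | x \in W]>>%VS = W.
Proof.
apply/eqP; rewrite eqEsubv; apply/andP; split.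
  by apply/span_subvP => x; rewrite mem_enum inE.
by apply/subvP => x xW; apply: memv_span; rewrite mem_enum inE.
Qed.

Lemma is_subspace_dimP (k : nat) X :
  reflect (exists2 W : {vspace 'rV[F]_v}, \dim W = k & X = [set x | x \in W])
          (is_subspace_dim k X).
Proof.
apply: (iffP andP) => [[/eqP XE /eqP dW] | [W dW ->]]; first by exists <<enum X>>%VS.
by rewrite span_set dW !eqxx.
Qed.

Lemma ann_hyperplane u : u != 0 -> is_hyperplane (ann u).
Proof.
move=> un0; apply/is_subspace_dimP; exists (annv u); last exact: annvE.
by rewrite dim_annv rank_rV un0 subn1.
Qed.

(* ... and every hyperplane has a normal: a nonzero vector orthogonal to a
   basis of it, which exists since fewer than v rows have a nonzero annihilator. *)
Lemma hyperplane_ann H : (0 < v)%N -> is_hyperplane H ->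
  exists2 u : 'rV[F]_v, u != 0 & H = ann u.
Proof.
move=> v_gt0 /is_subspace_dimP [W dW ->].
pose B := \matrix_(i < \dim W) tnth (vbasis W) i.
have ann_gt1 : (1 < #|ann B|)%N.
  rewrite card_ann (leq_trans (finNzRing_gt1 F)) // -{1}(expn1 q).
  rewrite leq_pexp2l ?(ltnW (finNzRing_gt1 F)) // subn_gt0.
  by rewrite (leq_ltn_trans (rank_leq_row B)) // dW ltn_predL.
have [u uB un0] : exists2 u : 'rV[F]_v, u \in ann B & u != 0.
  case/card_gt1P: ann_gt1 => x [y [xB yB xy]].
  by case: (eqVneq x 0) => [x0 | ]; [exists y; rewrite // -x0 eq_sym | exists x].
exists u => //; rewrite annvE; suff -> : W = annv u by [].
apply/eqP; rewrite eqEdim dim_annv rank_rV un0 subn1 -dW leqnn andbT.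
rewrite -(span_basis (vbasisP W)); apply/span_subvP => _ /tnthP [i ->].
by rewrite memv_ker lfunE /= -(rowK (fun i => tnth (vbasis W) i) i) -mem_ann ann_row.
Qed.

Definition point_of p : {set 'rV[F]_v} := [set x | x \in <[p]>%VS].

Definition point_gen X : 'rV[F]_v := vpick <<enum X>>%VS.

Lemma point_genP P : is_point P -> point_gen P != 0 /\ P = point_of (point_gen P).
Proof.
case/is_subspace_dimP => W dW ->; rewrite /point_gen span_set.
have gen_n0 : vpick W != 0 by rewrite vpick0 -dimv_eq0 dW.
split=> //; suff E : W = <[vpick W]>%VS by rewrite /point_of {1}E.
apply/esym/eqP; rewrite eqEdim dim_vline gen_n0 dW leqnn andbT -memvE.
exact: memv_pick.
Qed.

Lemma point_of_sub_ann p u : (point_of p \subset ann u) = (p \in ann u).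
Proof.
apply/subsetP/idP => [sub | /[!inE] pu x]; first by apply: sub; rewrite inE memv_line.
by rewrite !inE => /vlineP [c ->]; rewrite -scalemxAl (eqP pu) scaler0.
Qed.

Lemma distinct_points p p' : p != 0 -> p' != 0 ->
  point_of p != point_of p' -> p' \notin <[p]>%VS.
Proof.
move=> pn0 p'n0; apply: contra => p'p; apply/eqP; rewrite /point_of.
suff -> : <[p]>%VS = <[p']>%VS by [].
by apply/eqP; rewrite eq_sym eqEdim -memvE p'p !dim_vline pn0 p'n0.
Qed.

Lemma ann_scale (c : F) u : c != 0 -> ann (c *: u) = ann u.
Proof.
by move=> cn0; apply/setP => x; rewrite !inE linearZ /= -scalemxAr scaler_eq0 (negPf cn0).
Qed.

Definition normal (H : {set 'rV[F]_v}) : 'rV[F]_v :=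
  odflt 0 [pick u : 'rV[F]_v | (u != 0) && (ann u == H)].

Lemma normalP (H : {set 'rV[F]_v}) : (0 < v)%N -> is_hyperplane H ->
  normal H != 0 /\ ann (normal H) = H.
Proof.
move=> v_gt0 hypH; rewrite /normal; case: pickP => [u /andP [un0 /eqP] // | none].
have [u un0 HE] := hyperplane_ann v_gt0 hypH.
by move: (none u); rewrite un0 HE eqxx.
Qed.

End Geometry.

Section Counting.
Variables (F : finFieldType) (v : nat) (S : {set {set 'rV[F]_v}}).
Hypothesis S_points : forall P, P \in S -> is_point P.
Local Notation q := #|F|.
Local Notation gen := point_gen.

Definition hits (u : 'rV[F]_v) : nat := #|points_in S (ann u)|.

Definition missing_normals : {set 'rV[F]_v} :=
  [set u : 'rV[F]_v | (u != 0) && (hits u == 0%N)].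

Lemma hitsE u : hits u = (\sum_(P in S) (gen P \in ann u))%N.
Proof.
rewrite sum_indicator; apply: eq_card => P; rewrite !inE.
case PS: (P \in S) => //=.
by have [_ {1}->] := point_genP (S_points PS); rewrite point_of_sub_ann inE.
Qed.

Lemma hits0 : hits 0 = #|S|.
Proof.
rewrite /hits; suff -> : points_in S (ann (0 : 'rV[F]_v)) = S by [].
apply/setP => P; rewrite inE andb_idr // => _.
by apply/subsetP => x _; rewrite inE trmx0 mulmx0.
Qed.

Lemma card_ann_gen P : P \in S ->
  #|[set u : 'rV[F]_v | gen P \in ann u]| = (q ^ v.-1)%N.
Proof.
move=> PS; have [pn0 _] := point_genP (S_points PS).
transitivity #|ann (gen P)|; last by rewrite card_ann rank_rV pn0 subn1.
by apply: eq_card => u; rewrite inE ann_sym.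
Qed.

Lemma card_ann_gen2 P Q : P \in S -> Q \in S -> P != Q ->
  #|[set u : 'rV[F]_v | (gen P \in ann u) && (gen Q \in ann u)]| = (q ^ (v - 2))%N.
Proof.
move=> PS QS PQ.
have [pn0 PE] := point_genP (S_points PS); have [qn0 QE] := point_genP (S_points QS).
have qnp : gen Q \notin <[gen P]>%VS by apply: distinct_points; rewrite // -PE -QE.
transitivity #|ann (col_mx (gen P) (gen Q))|; last by rewrite card_ann rank_two_rows.
by apply: eq_card => u; rewrite inE ann_col_mx !(ann_sym u).
Qed.

Lemma dim_gt1 : (1 < #|S|)%N -> (1 < v)%N.
Proof.
case/card_gt1P => P [Q [PS QS PQ]].
have [pn0 PE] := point_genP (S_points PS); have [qn0 QE] := point_genP (S_points QS).
have qnp : gen Q \notin <[gen P]>%VS by apply: distinct_points; rewrite // -PE -QE.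
by rewrite -(rank_two_rows pn0 qnp) rank_leq_col.
Qed.

Lemma sum_hits : (\sum_u hits u = #|S| * q ^ v.-1)%N.
Proof.
under eq_bigr do rewrite hitsE.
rewrite exchange_big /= -sum_nat_const; apply: eq_bigr => P PS.
by rewrite sum_indicator -(card_ann_gen PS); apply: eq_card => u; rewrite !inE.
Qed.

(* Second moment: count pairs of points on a common ann u. *)
Lemma sum_hits_sq :
  (\sum_u hits u ^ 2 = #|S| * (q ^ v.-1 + #|S|.-1 * q ^ (v - 2)))%N.
Proof.
have hits_sq u : (hits u ^ 2 =
    \sum_(P in S) \sum_(Q in S) ((gen P \in ann u) && (gen Q \in ann u)))%N.
  rewrite hitsE expnS expn1 big_distrl; apply: eq_bigr => P _.
  by rewrite big_distrr; apply: eq_bigr => Q _; rewrite /= mulnb.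
under eq_bigr do rewrite hits_sq.
rewrite exchange_big /= -sum_nat_const; apply: eq_bigr => P PS.
rewrite exchange_big /= (bigD1 P) //= sum_indicator.
rewrite (eq_bigr (fun _ => q ^ (v - 2))%N) => [|Q /andP [QS QP]]; last first.
  rewrite sum_indicator -(card_ann_gen2 PS QS); last by rewrite eq_sym.
  by apply: eq_card => u; rewrite !inE.
rewrite sum_nat_const (cardD1 P S) PS /= -(card_ann_gen PS); congr (_ + _ * _)%N.
  by apply: eq_card => u; rewrite !inE andbb.
by apply: eq_card => Q; rewrite !inE andbC.
Qed.

Lemma hits_dvd r (u : 'rV[F]_v) : divisible S r -> (q ^ r %| #|S|)%N -> u != 0 ->
  (q ^ r %| hits u)%N.
Proof. by move=> S_div dvd_S un0; rewrite /dvdn (S_div _ (ann_hyperplane un0)). Qed.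

(* Each hyperplane missing S has q - 1 normals: (H, c) |-> c * normal H is
   injective on disjoint hyperplanes and nonzero scalars. *)
Lemma disjoint_hyperplanes_count : (0 < v)%N ->
  (q.-1 * n_disjoint_hyperplanes S <= #|missing_normals|)%N.
Proof.
move=> v_gt0; pose scaled_normal (Hc : {set 'rV[F]_v} * F) := Hc.2 *: normal Hc.1.
set D := [set H | is_hyperplane H & points_in S H == set0].
rewrite /n_disjoint_hyperplanes -/D mulnC -(cardsC1 (0 : F)) -cardsX.
rewrite -(card_in_imset (f := scaled_normal)) => [|[H c] [H' c']].
  apply: subset_leq_card; apply/subsetP => _ /imsetP [[H c] /setXP [HD cn0] ->].
  move: HD cn0; rewrite !inE /scaled_normal /= => /andP [hypH /eqP disjH] cn0.
  have [un0 annH] := normalP v_gt0 hypH.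
  by rewrite scaler_eq0 negb_or cn0 un0 /hits ann_scale // annH disjH cards0.
rewrite !inE /scaled_normal /=.
move=> /andP [/andP [hypH _] cn0] /andP [/andP [hypH' _] cn0'] E.
have [un0 annH] := normalP v_gt0 hypH; have [un0' annH'] := normalP v_gt0 hypH'.
have HH' : H = H'.
  by rewrite -annH -annH' -(ann_scale (normal H) cn0) -(ann_scale (normal H') cn0') E.
move: E; rewrite -HH' => /eqP; rewrite -subr_eq0 -scalerBl scaler_eq0 (negPf un0) orbF.
by rewrite subr_eq0 => /eqP ->.
Qed.

Section Moments.
Variable r : nat.
Hypothesis card_S : #|S| = (q ^ r.+1)%N.
Let Q : rat := q%:R.
Let R : rat := Q ^+ r.

Lemma sum_excess : (1 < v)%N ->
  \sum_(u | u != 0) excess R (hits u)%:R = R * (Q - 1) * (Q ^+ v.-1 - R * (Q - 2)).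
Proof.
move=> v_gt1; set X := Q ^+ (v - 2).
have v1E : Q ^+ v.-1 = Q * X by rewrite /X -exprS; congr (_ ^+ _); lia.
have vE : Q ^+ v = Q * (Q * X) by rewrite -v1E -exprS prednK // ltnW.
have SE : #|S|%:R = Q * R by rewrite card_S natrX exprS.
have S1E : #|S|.-1%:R = Q * R - 1.
  by rewrite -SE -subn1 natrB // card_S expn_gt0 (ltnW (finNzRing_gt1 F)).
have total : \sum_u excess R (hits u)%:R = Q * R * (Q - 1) * X.
  rewrite (eq_bigr (fun u => (hits u ^ 2)%N%:R
                        + (- (3 * R) * (hits u)%:R + 2 * R ^+ 2))) => [|u _]; last first.
    by rewrite /excess natrX; ring.
  rewrite !big_split /= -mulr_sumr sumr_const card_mx mul1n -!natr_sum.
  rewrite sum_hits_sq sum_hits !natrM natrD natrM SE S1E !natrX -/Q v1E -/X.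
  by rewrite -[_ *+ (_ ^ v)]mulr_natr natrX -/Q vE; ring.
rewrite (bigD1 0) //= hits0 SE in total.
rewrite v1E; apply: (addrI (excess R (Q * R))); rewrite total /excess; ring.
Qed.

(* Each missing normal contributes 2R^2 to that sum, all other terms are >= 0. *)
Lemma missing_normals_bound : divisible S r -> (1 < v)%N ->
  2 * R ^+ 2 * #|missing_normals|%:R <= R * (Q - 1) * (Q ^+ v.-1 - R * (Q - 2)).
Proof.
move=> S_div v_gt1; rewrite -sum_excess // -sum_indicator natr_sum mulr_sumr.
apply: ler_sum => u un0.
have dvd_S : (q ^ r %| #|S|)%N by rewrite card_S expnS dvdn_mull.
have /divnK Eu := hits_dvd S_div dvd_S un0.
rewrite -Eu muln_eq0 expn_eq0 (gtn_eqF (ltnW (finNzRing_gt1 F))) andFb orbF.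
by rewrite natrM natrX excess_multiple_ge.
Qed.

(* The theorem with a natural exponent: 2 q^r N <= q^(v-1) - q^r (q - 2). *)
Lemma disjoint_hyperplanes_bound : divisible S r -> (1 < v)%N ->
  2 * R * (n_disjoint_hyperplanes S)%:R <= Q ^+ v.-1 - R * (Q - 2).
Proof.
move=> S_div v_gt1; set D := (n_disjoint_hyperplanes S)%:R.
have Q_gt1 : 1 < Q by rewrite ltr1n finNzRing_gt1.
have R_gt0 : 0 < R by rewrite exprn_gt0 // (lt_trans ltr01).
have c_gt0 : 0 < R * (Q - 1) by rewrite mulr_gt0 // subr_gt0.
rewrite -(ler_pM2l c_gt0) mulrA; apply: le_trans (missing_normals_bound S_div v_gt1).
have -> : R * (Q - 1) * (2 * R) * D = 2 * R ^+ 2 * ((Q - 1) * D) by ring.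
rewrite ler_pM2l; last by apply: mulr_gt0; [rewrite ltr0n | exact: exprn_gt0].
have := disjoint_hyperplanes_count (ltnW v_gt1).
rewrite -(ler_nat rat) natrM -subn1 natrB; first exact: id.
exact: ltnW (finNzRing_gt1 F).
Qed.

End Moments.

End Counting.

Theorem mainTheorem3 (F : finFieldType) (v r : nat)
    (S : {set {set 'rV[F]_v}}) :
  (1 <= r)%N ->
  (forall P, P \in S -> is_point P) ->
  spanning S ->
  divisible S r ->
  #|S| = (#|F| ^ r.+1)%N ->
  (n_disjoint_hyperplanes S)%:Q
    <= ((#|F|%:Q) ^ (v%:Z - r%:Z - 1) - #|F|%:Q + 2) / 2.
Proof.
move=> _ S_points _ S_div card_S.
have q_gt1 := finNzRing_gt1 F.
have v_gt1 : (1 < v)%N.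
  apply: (dim_gt1 S_points); rewrite card_S (leq_trans q_gt1) //.
  by rewrite -{1}(expn1 #|F|) leq_pexp2l // ltnW.
have := disjoint_hyperplanes_bound S_points card_S S_div v_gt1.
rewrite -!pmulrn; set Q : rat := #|F|%:R; set R := Q ^+ r.
set T := Q ^ (v%:Z - r%:Z - 1); set D := (n_disjoint_hyperplanes S)%:R.
have Q_gt0 : 0 < Q by rewrite ltr0n ltnW.
have R_gt0 : 0 < R by rewrite exprn_gt0.
have -> : Q ^+ v.-1 = R * T.
  rewrite /T /R -[Q ^+ r]/(Q ^ r%:Z) -expfzDr ?gt_eqF //.
  by have -> : (r%:Z + (v%:Z - r%:Z - 1)) = v.-1%:Z by lia.
move=> bound; rewrite ler_pdivlMr ?ltr0n // -(ler_pM2l R_gt0).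
have -> : R * (D * 2) = 2 * R * D by ring.
have -> : R * (T - Q + 2) = R * T - R * (Q - 2) by ring.
exact: bound.
Qed.
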